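(* Let $n=2m$ and let $\Delta'$ be the simplicial complex on vertex set $\{(i,j):1\le i\le j\le n,\ i+j\ne n+1\}$ whose faces are the sets $F$ with $\prod_{(i,j)\in F}x_{ij}\notin K(2,n)$, with $K(2,n)$ as in the context. Order the facets of $\Delta'$ as follows: if $F$ is a facet of $\Delta_A$ and $G$ a facet of $\Delta_B$, then $F<G$ iff $A<B$ lexicographically, or $A=B$ and $F<G$ in the standard order of paths in $T_A$. Then this total order is a two-way shelling of $\Delta'$; precisely, for every facet $F$ of $\Delta'$, $$\langle F\rangle\cap\langle G:G<F\rangle=\langle F\setminus\{x\}:x\in F^-\rangle\quad\text{and}\quad\langle F\rangle\cap\langle G:G>F\rangle=\langle F\setminus\{x\}:x\in F^+\rangle.$$
   Context: $K(2,n)\subset K[x_{ij}:1\le i\le j\le n]$ is generated by the products $x_{ij}x_{hk}$ ($i\le j$, $h\le k$) not involving any $x_{a,n+1-a}$ and such that either $a+b=n+1$ for some $a\in\{i,j\}$, $b\in\{h,k\}$, or $i<h$ and $j<k$. $\langle F_1,\dots,F_k\rangle$ is the smallest simplicial complex containing $F_1,\dots,F_k$. $\mathcal A$ is the family of $m$-subsets $A\subseteq[n]$ with $i+j\ne n+1$ for all $i,j\in A$; for $A=\{a_1<\dots<a_m\}$, $T_A=\{(i,j):i\le j,\ i,j\in A\}$ and $\Delta_A=\{F\in\Delta':F\subseteq T_A\}$. It is a fact (established in the paper) that the facets of $\Delta_A$ are exactly the paths in $T_A$ starting at $(a_1,a_m)$ and ending at a diagonal position $(a_i,a_i)$, with steps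 horizontally left or vertically down, and each facet of $\Delta'$ is a facet of exactly one $\Delta_A$. Lexicographic order: $\{a_1<\dots<a_m\}<\{b_1<\dots<b_m\}$ iff $a_j<b_j$ for the smallest $j$ with $a_j\ne b_j$. Standard order of paths in $T_A$: $F<G$ iff at the first step (starting from $(a_1,a_m)$) where they differ, $F$'s step is horizontal and $G$'s is vertical. Types: an interior point of a path is a left turn if the step into it is horizontal and the step out vertical, a right turn if the step in is vertical and the step out horizontal; the last point (if the path has at least two points) is a left turn if the last step is horizontal, a right turn if vertical; all other points are isolated, each being the only point of the path with a certain $c\in A$ as row or column index ($c$ is its index). $F^-$ = right turns of $F$ together with isolated points of index $>m$; $F^+=F\setminus F^-$ = left turns together with isolated points of index $\le m$. *)

(* n = 2m throughout; indices 1..n live in 'I_n.+1 (0 unused). *)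
From mathcomp Require Import all_boot all_order.
Set Implicit Arguments.
Unset Strict Implicit.
Unset Printing Implicit Defensive.

Definition pt (m : nat) := ('I_(m.*2).+1 * 'I_(m.*2).+1)%type.

Definition var_pos (m : nat) (p : pt m) : bool := (1 <= p.1) && (p.1 <= p.2).

Definition antidiag (m : nat) (p : pt m) : bool := p.1 + p.2 == (m.*2).+1.

Definition vert (m : nat) (p : pt m) : bool := var_pos p && ~~ antidiag p.

Definition gen_pair (m : nat) (p q : pt m) : bool :=
  let: (i, j) := (val p.1, val p.2) in
  let: (h, k) := (val q.1, val q.2) in
  [&& var_pos p, var_pos q, ~~ antidiag p, ~~ antidiag q &
    [|| i + h == (m.*2).+1, i + k == (m.*2).+1, j + h == (m.*2).+1,
        j + k == (m.*2).+1 | (i < h) && (j < k)]].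

(* monomials as exponent vectors *)
Definition gen_mon (m : nat) (p q : pt m) : {ffun pt m -> nat} :=
  [ffun r => (r == p) + (r == q)].

Definition mdivides (m : nat) (f g : {ffun pt m -> nat}) : bool :=
  [forall r, f r <= g r].

(* a monomial lies in the monomial ideal K(2,n) iff some generator divides it *)
Definition inK (m : nat) (f : {ffun pt m -> nat}) : bool :=
  [exists p, exists q, gen_pair p q && mdivides (gen_mon p q) f].

Definition sqmon (m : nat) (F : {set pt m}) : {ffun pt m -> nat} :=
  [ffun r => nat_of_bool (r \in F)].

Definition face (m : nat) (F : {set pt m}) : bool :=
  (F \subset [set p | vert p]) && ~~ inK (sqmon F).

Definition facet (m : nat) (F : {set pt m}) : Prop :=
  face F /\ forall G : {set pt m}, face G -> F \subset G -> G = F.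

Definition inA (m : nat) (A : {set 'I_(m.*2).+1}) : bool :=
  [&& #|A| == m, [forall i in A, 1 <= i] &
      [forall i in A, forall j in A, i + j != (m.*2).+1]].

(* A = {a_1 < ... < a_m}; we use 0-based indices: aA A k = a_{k+1} *)
Definition sortA (m : nat) (A : {set 'I_(m.*2).+1}) : seq nat :=
  sort leq [seq val i | i <- enum A].
Definition aA (m : nat) (A : {set 'I_(m.*2).+1}) (k : nat) : nat :=
  nth 0 (sortA A) k.

Definition lexlt (m : nat) (A B : {set 'I_(m.*2).+1}) : Prop :=
  exists k, [/\ k < m, (forall l, l < k -> aA A l = aA B l) & aA A k < aA B k].

(* Paths in T_A: a word w of m-1 steps, true = horizontal (left, column index
   decreases), false = vertical (down, row index increases).  Point number k
   (0 <= k < m) has index position (r_k, s_k) with r_0 = 0, s_0 = m-1. *)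
Definition prow (w : seq bool) (k : nat) : nat := count negb (take k w).
Definition pcol (m : nat) (w : seq bool) (k : nat) : nat :=
  m.-1 - count id (take k w).

Definition rowi (m : nat) (A : {set 'I_(m.*2).+1}) w k := aA A (prow w k).
Definition coli (m : nat) (A : {set 'I_(m.*2).+1}) w k := aA A (pcol m w k).

Definition ptk (m : nat) (A : {set 'I_(m.*2).+1}) (w : seq bool) (k : nat)
  : pt m := (inord (rowi A w k), inord (coli A w k)).

Definition path_set (m : nat) (A : {set 'I_(m.*2).+1}) (w : seq bool)
  : {set pt m} := [set p | [exists k : 'I_m, p == ptk A w k]].

Definition stdlt (m : nat) (v w : seq bool) : Prop :=
  exists k, [/\ k < m.-1, take k v = take k w, nth false v k = true
              & nth false w k = false].

(* types of the points of a path (point k; step into it is w_(k-1),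
   step out of it is w_k) *)
Definition left_turn (m : nat) (w : seq bool) (k : nat) : bool :=
  [|| [&& 0 < k, k < m.-1, nth false w k.-1 & ~~ nth false w k]
    | [&& 2 <= m, k == m.-1 & nth false w k.-1]].
Definition right_turn (m : nat) (w : seq bool) (k : nat) : bool :=
  [|| [&& 0 < k, k < m.-1, ~~ nth false w k.-1 & nth false w k]
    | [&& 2 <= m, k == m.-1 & ~~ nth false w k.-1]].
Definition isolated (m : nat) (w : seq bool) (k : nat) : bool :=
  ~~ left_turn m w k && ~~ right_turn m w k.

Definition is_index (m : nat) (A : {set 'I_(m.*2).+1}) (w : seq bool)
    (k : nat) (c : nat) : bool :=
  ((rowi A w k == c) || (coli A w k == c)) &&
  [forall l : 'I_m, (val l != k) ==>
      ((rowi A w l != c) && (coli A w l != c))].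

Definition minus_set (m : nat) (A : {set 'I_(m.*2).+1}) (w : seq bool)
  : {set pt m} :=
  [set p | [exists k : 'I_m, (p == ptk A w k) &&
      (right_turn m w k ||
       (isolated m w k &&
        [exists c : 'I_(m.*2).+1, [&& c \in A, m < c & is_index A w k c]]))]].

Definition plus_set (m : nat) (A : {set 'I_(m.*2).+1}) (w : seq bool)
  : {set pt m} := path_set A w :\: minus_set A w.

Definition facet_lt (m : nat) (G F : {set pt m}) : Prop :=
  exists (B A : {set 'I_(m.*2).+1}) (v w : seq bool),
    [/\ inA B, inA A, size v = m.-1 & size w = m.-1] /\
    [/\ G = path_set B v, F = path_set A w, facet G, facet F &
        (lexlt B A \/ (B = A /\ stdlt m v w))].

(* A facet [F] of Δ' is a lattice path in [T_A].  Removing any point [x] of [F]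
   leaves a set contained in another facet: a turn can be flipped, and an
   isolated point with index [c] can be moved onto a line of the antipode
   [n + 1 - c], because the remaining points form a chain and every chain of
   [T_B] lies on some path of [T_B].  Which side of [F] that facet lies on is
   forced by a separation property: every facet [G < F] misses a point of [F^-]
   and every facet [G > F] misses a point of [F^+].  For [G] in the same [T_A]
   the missed point is the turn ending the first run where the two words
   diverge; otherwise it is a point of [F] on the line of an element of [A]
   missing from [G]'s set, found at the first lexicographic difference through
   antipodes, and it lies in [F^-] or [F^+] according to whether that element
   exceeds [m].  As [F^-] and [F^+] partition [F], a face of [F] lies in an
   earlier (later) facet iff it avoids a point of [F^-] ([F^+]). *)

From mathcomp Require Import all_boot all_order zify.
Set Implicit Arguments.
Unset Strict Implicit.
Unset Printing Implicit Defensive.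

(** * Lattice words *)

Definition hsteps (w : seq bool) k := count id (take k w).

Lemma prow_S w k : k < size w -> prow w k.+1 = prow w k + ~~ nth false w k.
Proof. by move=> kw; rewrite /prow (take_nth false kw) -cats1 count_cat /= addn0. Qed.

Lemma hsteps_S w k : k < size w -> hsteps w k.+1 = hsteps w k + nth false w k.
Proof. by move=> kw; rewrite /hsteps (take_nth false kw) -cats1 count_cat /= addn0. Qed.

Lemma prow_add_hsteps w k : k <= size w -> prow w k + hsteps w k = k.
Proof.
by move=> kw; rewrite /prow /hsteps addnC count_predC size_takel.
Qed.

Lemma hsteps_mono w k l : k <= l -> hsteps w k <= hsteps w l.
Proof. by move=> kl; rewrite /hsteps -(subnKC kl) takeD count_cat leq_addr. Qed.

Lemma prow_mono w k l : k <= l -> prow w k <= prow w l.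
Proof. by move=> kl; rewrite /prow -(subnKC kl) takeD count_cat leq_addr. Qed.

Lemma pcol_mono m w k l : k <= l -> pcol m w l <= pcol m w k.
Proof. by move=> kl; rewrite /pcol leq_sub2l // hsteps_mono. Qed.

Lemma prow0 w : prow w 0 = 0.
Proof. by rewrite /prow take0. Qed.

Lemma hsteps0 w : hsteps w 0 = 0.
Proof. by rewrite /hsteps take0. Qed.

Lemma prow_cons_S x u k : prow (x :: u) k.+1 = ~~ x + prow u k.
Proof. by []. Qed.

Lemma hsteps_cons_S x u k : hsteps (x :: u) k.+1 = x + hsteps u k.
Proof. by []. Qed.

Lemma pcol0 m w : pcol m w 0 = m.-1.
Proof. by rewrite /pcol take0 subn0. Qed.

Lemma prow_take_eq k v w i : take k v = take k w -> i <= k ->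
  prow v i = prow w i /\ forall m, pcol m v i = pcol m w i.
Proof. by move=> e ik; rewrite /prow /pcol -(take_takel v ik) -(take_takel w ik) e. Qed.

Lemma pcol_lt m w k : k < m -> pcol m w k < m.
Proof. rewrite /pcol; lia. Qed.

Section Word.
Variables (m : nat) (w : seq bool).
Hypothesis hw : size w = m.-1.

Lemma pcolE k : k < m -> pcol m w k = m.-1 - k + prow w k.
Proof.
move=> km; have := prow_add_hsteps (w := w) (k := k); rewrite hw /pcol -/(hsteps w k).
lia.
Qed.

Lemma prow_le_pcol k : k < m -> prow w k <= pcol m w k.
Proof. by move=> km; rewrite pcolE // leq_addl. Qed.

Lemma prow_lt k : k < m -> prow w k < m.
Proof. by move=> km; apply: leq_ltn_trans (prow_le_pcol km) (pcol_lt w km). Qed.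

Lemma pcol_gt0 k : k < m.-1 -> 0 < pcol m w k.
Proof. by move=> km; rewrite pcolE; lia. Qed.

Lemma prow_last : prow w m.-1 = pcol m w m.-1.
Proof.
case: (posnP m) => [m0|m_gt0]; first by rewrite m0 /pcol /prow take0.
by rewrite pcolE ?prednK // subnn.
Qed.

Lemma step_h k : k < m.-1 -> nth false w k ->
  prow w k.+1 = prow w k /\ pcol m w k.+1 = (pcol m w k).-1.
Proof.
move=> km hk; have kw : k < size w by rewrite hw.
rewrite prow_S // hk addn0; split=> //.
have := hsteps_S kw; rewrite hk /pcol -!/(hsteps w _).
have := prow_add_hsteps (w := w) (k := k.+1); rewrite hw => /(_ km).
have := prow_add_hsteps (w := w) (k := k); rewrite hw => /(_ (ltnW km)).
lia.
Qed.

Lemma step_v k : k < m.-1 -> nth false w k = false ->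
  prow w k.+1 = (prow w k).+1 /\ pcol m w k.+1 = pcol m w k.
Proof.
move=> km hk; have kw : k < size w by rewrite hw.
by rewrite prow_S // hk addn1 /pcol -!/(hsteps w _) hsteps_S // hk addn0.
Qed.

Lemma run_v k d : k + d <= m.-1 -> (forall i, k <= i < k + d -> nth false w i = false) ->
  prow w (k + d) = prow w k + d /\ pcol m w (k + d) = pcol m w k.
Proof.
elim: d => [|d IH] kd hrun; first by rewrite !addn0.
have [e1 e2] := IH ltac:(lia) (fun i hi => hrun i ltac:(lia)).
have [s1 s2] := step_v (k := k + d) ltac:(lia) (hrun (k + d) ltac:(lia)).
by rewrite addnS s1 s2 e1 e2 addnS.
Qed.

Lemma run_h k d : k + d <= m.-1 -> (forall i, k <= i < k + d -> nth false w i) ->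
  prow w (k + d) = prow w k /\ pcol m w (k + d) = pcol m w k - d.
Proof.
elim: d => [|d IH] kd hrun; first by rewrite !addn0 subn0.
have [e1 e2] := IH ltac:(lia) (fun i hi => hrun i ltac:(lia)).
have [s1 s2] := step_h (k := k + d) ltac:(lia) (hrun (k + d) ltac:(lia)).
by rewrite addnS s1 s2 e1 e2 subnS.
Qed.

Lemma run_end b k : k < m.-1 -> nth false w k = b ->
  exists2 j, k < j <= m.-1 &
    (j = m.-1 \/ nth false w j = ~~ b) /\ forall i, k <= i < j -> nth false w i = b.
Proof.
move=> km hk.
have exP : exists j, (k < j) && ((j == m.-1) || (nth false w j == ~~ b)).
  by exists m.-1; rewrite km eqxx.
case: (ex_minnP exP) => j /andP [kj hj] minj; exists j.
  by rewrite kj /=; apply: minj; rewrite km eqxx.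
split; first by case/orP: hj => /eqP; [left | right].
move=> i /andP [ki ij]; case: (eqVneq k i) => [<- //|nki].
apply/eqP/negP => hi; have hi' : nth false w i == ~~ b by move: hi; case: (nth _ _ _); case: (b).
by have := minj i; rewrite ltn_neqAle nki ki hi' orbT => /(_ isT); lia.
Qed.

Lemma position_inj k l : k < m -> l < m -> prow w k = prow w l ->
  pcol m w k = pcol m w l -> k = l.
Proof. by move=> km lm; rewrite !pcolE //; lia. Qed.

Lemma row_entry t : t < m -> t <= prow w m.-1 ->
  exists2 k, k < m & prow w k = t /\ (k = 0 \/ nth false w k.-1 = false).
Proof.
move=> tm; suff: forall N, N <= m.-1 -> t <= prow w N ->
    exists2 k, k <= N & prow w k = t /\ (k = 0 \/ nth false w k.-1 = false).
  by move=> /(_ m.-1 (leqnn _)) h /h [k kN hk]; exists k => //; lia.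
elim=> [|N IH] hN htN.
  by exists 0 => //; split; [move: htN; rewrite prow0; lia | left].
case: (leqP t (prow w N)) => h.
  by have [k kN hk] := IH (ltnW hN) h; exists k => //; lia.
case hn: (nth false w N).
  by have [e _] := step_h hN hn; move: htN; rewrite e; lia.
have [e _] := step_v hN hn; exists N.+1 => //.
by split; [move: htN; rewrite e; lia | right].
Qed.

Lemma col_entry t : pcol m w m.-1 <= t -> t < m ->
  exists2 k, k < m & pcol m w k = t /\ (k = 0 \/ nth false w k.-1).
Proof.
move=> ht tm; suff: forall N, N <= m.-1 -> pcol m w N <= t ->
    exists2 k, k <= N & pcol m w k = t /\ (k = 0 \/ nth false w k.-1).
  by move=> /(_ m.-1 (leqnn _) ht) [k kN hk]; exists k => //; lia.
elim=> [|N IH] hN htN.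
  by exists 0 => //; split; [move: htN; rewrite pcol0; lia | left].
case: (leqP (pcol m w N) t) => h.
  by have [k kN hk] := IH (ltnW hN) h; exists k => //; lia.
case hn: (nth false w N); last first.
  by have [_ e] := step_v hN hn; move: htN; rewrite e; lia.
have [_ e] := step_h hN hn; exists N.+1 => //.
by split; [move: htN; rewrite e; lia | right].
Qed.

Lemma row_exit t : t < prow w m.-1 ->
  exists2 k, k < m.-1 & prow w k = t /\ nth false w k = false.
Proof.
move=> ht; have m_gt0 : 0 < m by case: (posnP m) ht => // ->; rewrite prow0.
have tm : t.+1 < m by apply: leq_ltn_trans ht (prow_lt (k := m.-1) _); lia.
have [k km [hk [k0|hin]]] := row_entry tm ht.
  by move: hk; rewrite k0 prow0.
have k_gt0 : 0 < k by case: (posnP k) hk => // ->; rewrite prow0.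
have [e _] := step_v (k := k.-1) ltac:(lia) hin; rewrite prednK // in e.
by exists k.-1; [lia | split => //; lia].
Qed.

Lemma col_exit t : t < m -> pcol m w m.-1 < t ->
  exists2 k, k < m.-1 & pcol m w k = t /\ nth false w k.
Proof.
move=> tm ht; have [k km [hk [k0|hin]]] := col_entry (t := t.-1) ltac:(lia) ltac:(lia).
  by move: hk; rewrite k0 pcol0; lia.
have k_gt0 : 0 < k by case: (posnP k) hk => // ->; rewrite pcol0; lia.
have := pcol_gt0 (k := k.-1) ltac:(lia).
have [_ e] := step_h (k := k.-1) ltac:(lia) hin; rewrite prednK // in e.
by exists k.-1; [lia | split => //; lia].
Qed.

(* The path starts in column [m-1] and ends on the diagonal, so each line is met. *)
Lemma exists_point_on_line t : t < m ->
  exists2 k, k < m & prow w k = t \/ pcol m w k = t.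
Proof.
move=> tm; case: (leqP t (prow w m.-1)) => h.
  by have [k km [hk _]] := row_entry tm h; exists k; last left.
have [k km [hk _]] := col_entry (t := t) ltac:(rewrite -prow_last; lia) tm.
by exists k; last right.
Qed.

End Word.

(** * The sorted elements of [A] and antipodes *)

Definition antipode m (c : 'I_(m.*2).+1) : 'I_(m.*2).+1 := inord ((m.*2).+1 - c).

Lemma antipodeE m (c : 'I_(m.*2).+1) : 0 < c -> antipode c = (m.*2).+1 - c :> nat.
Proof. by move=> c0; rewrite /antipode inordK //; have := ltn_ord c; lia. Qed.

Lemma antipode_gt0 m (c : 'I_(m.*2).+1) : 0 < c -> 0 < antipode c.
Proof. by move=> c0; rewrite antipodeE //; have := ltn_ord c; lia. Qed.

Lemma antipodeK m (c : 'I_(m.*2).+1) : 0 < c -> antipode (antipode c) = c.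
Proof.
move=> c0; apply: val_inj => /=; rewrite antipodeE ?antipode_gt0 // antipodeE //.
by have := ltn_ord c; lia.
Qed.

Section SortedElements.
Variables (m : nat) (A : {set 'I_(m.*2).+1}).
Hypothesis hA : inA A.

Lemma inA_card : #|A| = m.
Proof. by case/and3P: hA => /eqP. Qed.

Lemma inA_gt0 c : c \in A -> 0 < c.
Proof. by case/and3P: hA => _ /forallP /(_ c) /implyP. Qed.

Lemma inA_antipodal a b : a \in A -> b \in A -> a + b != (m.*2).+1.
Proof.
by case/and3P: hA => _ _ /forallP /(_ a) /implyP h /h /forallP /(_ b) /implyP.
Qed.

Lemma size_sortA : size (sortA A) = m.
Proof. by rewrite /sortA size_sort size_map -cardE inA_card. Qed.

Lemma mem_sortA x : (x \in sortA A) = (x \in [seq val i | i <- enum A]).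
Proof. by rewrite /sortA mem_sort. Qed.

Lemma sortA_sorted : sorted ltn (sortA A).
Proof.
rewrite ltn_sorted_uniq_leq sort_uniq sort_sorted ?andbT; last exact: leq_total.
by rewrite map_inj_uniq ?enum_uniq //; exact: val_inj.
Qed.

Lemma aA_lt i j : i < j -> j < m -> aA A i < aA A j.
Proof.
move=> ij jm; apply: (sorted_ltn_nth ltn_trans 0 sortA_sorted) => //;
  rewrite inE size_sortA //; exact: ltn_trans jm.
Qed.

Lemma aA_le i j : i <= j -> j < m -> aA A i <= aA A j.
Proof. by rewrite leq_eqVlt => /orP [/eqP -> //|ij jm]; exact/ltnW/aA_lt. Qed.

Lemma aA_ltE i j : i < m -> j < m -> (aA A i < aA A j) = (i < j).
Proof.
move=> im jm; apply/idP/idP => [|/aA_lt]; last exact.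
by case: (leqP j i) => // /aA_le /(_ im); rewrite leqNgt => /negP.
Qed.

Lemma aA_leE i j : i < m -> j < m -> (aA A i <= aA A j) = (i <= j).
Proof. by move=> im jm; rewrite leqNgt aA_ltE // -leqNgt. Qed.

Lemma aA_inj i j : i < m -> j < m -> aA A i = aA A j -> i = j.
Proof. by move=> im jm e; apply/eqP; rewrite eqn_leq -(aA_leE im jm) -(aA_leE jm im) e leqnn. Qed.

Lemma aA_mem i : i < m -> exists2 c : 'I_(m.*2).+1, c \in A & c = aA A i :> nat.
Proof.
move=> im; have : aA A i \in sortA A by rewrite /aA mem_nth // size_sortA.
by rewrite mem_sortA => /mapP [c]; rewrite mem_enum => cA ->; exists c.
Qed.

Lemma aA_gt0 i : i < m -> 0 < aA A i.
Proof. by move=> /aA_mem [c /inA_gt0 h <-]. Qed.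

Lemma aA_le_n i : i < m -> aA A i <= m.*2.
Proof. by move=> /aA_mem [c _ <-]; rewrite -ltnS ltn_ord. Qed.

Lemma aA_index (c : 'I_(m.*2).+1) : c \in A ->
  index (val c) (sortA A) < m /\ aA A (index (val c) (sortA A)) = c.
Proof.
move=> cA; have cs : val c \in sortA A by rewrite mem_sortA map_f // mem_enum.
by rewrite -[X in _ < X]size_sortA index_mem /aA nth_index.
Qed.

Lemma aA_surj (c : 'I_(m.*2).+1) : c \in A -> exists2 t, t < m & aA A t = c.
Proof. by move=> /aA_index []; exists (index (val c) (sortA A)). Qed.

Lemma aA_eq_mem (c : 'I_(m.*2).+1) t : t < m -> aA A t = c -> c \in A.
Proof. by move=> /aA_mem [d dA <-] /val_inj <-. Qed.

Lemma antipode_notin (c : 'I_(m.*2).+1) : c \in A -> antipode c \notin A.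
Proof.
move=> cA; apply/negP => /inA_antipodal /(_ cA); rewrite antipodeE ?inA_gt0 //.
by rewrite subnK ?eqxx // ltnW.
Qed.

(* [A] has [m] elements and meets each of the [m] antipodal pairs at most once,
   hence exactly once. *)
Lemma antipode_mem (c : 'I_(m.*2).+1) : 0 < c -> c \notin A -> antipode c \in A.
Proof.
move=> c0 cA.
have f_inj : {in A &, injective (@antipode m)}.
  by move=> x y xA yA /(congr1 (@antipode m)); rewrite !antipodeK ?inA_gt0.
have disj : [disjoint A & @antipode m @: A].
  apply/pred0P => x /=; apply/negbTE/andP => -[xA /imsetP [y yA ey]].
  by move: xA; rewrite ey (negbTE (antipode_notin yA)).
have cover : A :|: @antipode m @: A = [set~ ord0].
  apply/eqP; rewrite eqEcard cardsC1 card_ord cardsU (disjoint_setI0 disj) cards0.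
  rewrite card_in_imset // inA_card subn0 addnn leqnn andbT.
  apply/subsetP => x; rewrite !inE -val_eqE /= -lt0n.
  by case/orP => [/inA_gt0 //|/imsetP [y yA ->]]; rewrite antipode_gt0 ?inA_gt0.
have : c \in [set~ ord0] by rewrite !inE -val_eqE /= -lt0n.
rewrite -cover inE (negbTE cA) /= => /imsetP [b bA ->].
by rewrite antipodeK ?inA_gt0.
Qed.

Lemma inA_swap (c : 'I_(m.*2).+1) : c \in A -> inA (antipode c |: (A :\ c)).
Proof.
move=> cA; have c'A := antipode_notin cA; have c0 := inA_gt0 cA.
have c'E := antipodeE c0; have c_lt := ltn_ord c.
apply/and3P; split.
- rewrite cardsU1 in_setD1 (negbTE c'A) andbF /=.
  by have := cardsD1 c A; rewrite cA inA_card => e; apply/eqP; exact: esym e.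
- apply/forallP => i; apply/implyP; rewrite in_setU1 in_setD1.
  by case/orP => [/eqP ->|/andP [_ /inA_gt0 //]]; rewrite antipode_gt0.
have sum_ne j : j != c -> antipode c + j != (m.*2).+1.
  apply: contra => /eqP e; apply/eqP/val_inj => /=.
  by move: e; rewrite c'E; have := ltn_ord j; lia.
apply/forallP => i; apply/implyP; rewrite in_setU1 in_setD1 => hi.
apply/forallP => j; apply/implyP; rewrite in_setU1 in_setD1 => hj.
case/orP: hi => [/eqP ->|/andP [ic iA]]; case/orP: hj => [/eqP ->|/andP [jc jA]].
- by rewrite c'E; lia.
- exact: sum_ne.
- by rewrite addnC sum_ne.
- exact: inA_antipodal.
Qed.

End SortedElements.

(** * Paths are facets *)

Definition ptlt m (p q : pt m) := (p.1 < q.1) && (p.2 < q.2).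

Definition chain m (S : {set pt m}) := {in S &, forall p q, ~~ ptlt p q}.

Lemma pt_val_inj m (p q : pt m) : p.1 = q.1 :> nat -> p.2 = q.2 :> nat -> p = q.
Proof. by case: p q => [p1 p2] [q1 q2] /= /val_inj -> /val_inj ->. Qed.

Lemma inK_sqmonP m (S : {set pt m}) :
  reflect (exists p q, [/\ p \in S, q \in S, p != q & gen_pair p q]) (inK (sqmon S)).
Proof.
apply: (iffP existsP) => [[p /existsP [q /andP [g /forallP d]]]|[p [q [pS qS pq g]]]].
  have dp := d p; have dq := d q; rewrite !ffunE !eqxx in dp dq.
  case: (eqVneq p q) => [e|pq]; first by move: dp; rewrite e eqxx; case: (q \in S).
  exists p, q; split=> //; first by move: dp; rewrite (negbTE pq); case: (p \in S).
  by move: dq; rewrite eq_sym (negbTE pq); case: (q \in S).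
exists p; apply/existsP; exists q; rewrite g; apply/forallP => r; rewrite !ffunE.
case: (eqVneq r p) => [->|rp]; first by rewrite (negbTE pq) pS.
by case: (eqVneq r q) => [->|//]; rewrite qS.
Qed.

Lemma gen_pair_vert m (p q : pt m) : vert p -> vert q ->
  gen_pair p q = [|| p.1 + q.1 == (m.*2).+1, p.1 + q.2 == (m.*2).+1,
      p.2 + q.1 == (m.*2).+1, p.2 + q.2 == (m.*2).+1 | ptlt p q].
Proof. by case: p q => [p1 p2] [q1 q2]; rewrite /vert /gen_pair => /andP [-> ->] /andP [-> ->]. Qed.

Lemma face_vert m (S : {set pt m}) p : face S -> p \in S -> vert p.
Proof. by case/andP => /subsetP h _ /h; rewrite inE. Qed.

Section PathFacet.
Variables (m : nat) (A : {set 'I_(m.*2).+1}) (w : seq bool).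
Hypotheses (hA : inA A) (hw : size w = m.-1).

Local Notation F := (path_set A w).

Lemma ptk_fst k : k < m -> (ptk A w k).1 = aA A (prow w k) :> nat.
Proof. by move=> km; rewrite /= inordK // ltnS aA_le_n // (prow_lt hw). Qed.

Lemma ptk_snd k : k < m -> (ptk A w k).2 = aA A (pcol m w k) :> nat.
Proof. by move=> km; rewrite /= inordK // ltnS aA_le_n // pcol_lt. Qed.

Lemma ptk_fst_mem k : k < m -> (ptk A w k).1 \in A.
Proof. by move=> km; apply: (aA_eq_mem hA (prow_lt hw km)); rewrite ptk_fst. Qed.

Lemma ptk_snd_mem k : k < m -> (ptk A w k).2 \in A.
Proof. by move=> km; apply: (aA_eq_mem hA (pcol_lt w km)); rewrite ptk_snd. Qed.

Lemma ptk_inj k l : k < m -> l < m -> ptk A w k = ptk A w l -> k = l.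
Proof.
move=> km lm e; apply: (position_inj hw km lm).
  by apply: (aA_inj hA (prow_lt hw km) (prow_lt hw lm)); rewrite -!ptk_fst // e.
by apply: (aA_inj hA (pcol_lt w km) (pcol_lt w lm)); rewrite -!ptk_snd // e.
Qed.

Lemma mem_path p : reflect (exists2 k, k < m & p = ptk A w k) (p \in F).
Proof.
rewrite inE; apply: (iffP existsP) => [[k /eqP ->]|[k km ->]]; first by exists k.
by exists (Ordinal km).
Qed.

Lemma ptk_mem k : k < m -> ptk A w k \in F.
Proof. by move=> km; apply/mem_path; exists k. Qed.

Lemma path_mem_coord x : x \in F -> x.1 \in A /\ x.2 \in A.
Proof. by case/mem_path => k km ->; split; [exact: ptk_fst_mem | exact: ptk_snd_mem]. Qed.

Lemma ptk_le k : k < m -> (ptk A w k).1 <= (ptk A w k).2.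
Proof.
by move=> km; rewrite ptk_fst ?ptk_snd ?aA_leE ?(prow_lt hw) ?pcol_lt ?(prow_le_pcol hw).
Qed.

Lemma ptk_ptlt k l : k < m -> l < m -> ~~ ptlt (ptk A w k) (ptk A w l).
Proof.
move=> km lm; rewrite /ptlt !ptk_fst ?ptk_snd // !aA_ltE ?(prow_lt hw) ?pcol_lt //.
apply/andP => -[lt1 lt2]; case: (leqP k l) => kl.
  by have := pcol_mono m w kl; lia.
by have := prow_mono w (ltnW kl); lia.
Qed.

Lemma path_chain : chain F.
Proof. by move=> p q /mem_path [k km ->] /mem_path [l lm ->]; exact: ptk_ptlt. Qed.

Lemma ptk_vert k : k < m -> vert (ptk A w k).
Proof.
move=> km; rewrite /vert /var_pos ptk_le // andbT /antidiag.
rewrite ptk_fst // aA_gt0 ?(prow_lt hw) //=.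
by have := inA_antipodal hA (ptk_fst_mem km) (ptk_snd_mem km); rewrite ptk_fst // ptk_snd.
Qed.

Lemma face_path : face F.
Proof.
apply/andP; split; first by apply/subsetP => p /mem_path [k km ->]; rewrite inE ptk_vert.
apply/inK_sqmonP => -[p [q [/mem_path [k km ->] /mem_path [l lm ->] _]]].
rewrite gen_pair_vert ?ptk_vert // (negbTE (ptk_ptlt km lm)) orbF.
have antip a b := negbTE (inA_antipodal hA a b).
by rewrite !antip ?ptk_fst_mem ?ptk_snd_mem.
Qed.

Lemma ptk_on_line k t (c : 'I_(m.*2).+1) : k < m -> prow w k = t \/ pcol m w k = t ->
  aA A t = c -> (ptk A w k).1 = c \/ (ptk A w k).2 = c.
Proof.
move=> km hk et; case: hk => e; [left | right]; apply: val_inj => /=.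
  by rewrite ptk_fst // e et.
by rewrite ptk_snd // e et.
Qed.

Lemma path_meets (c : 'I_(m.*2).+1) : c \in A ->
  exists2 k, k < m & (ptk A w k).1 = c \/ (ptk A w k).2 = c.
Proof.
move=> cA; have [t tm et] := aA_surj hA cA.
have [k km hk] := exists_point_on_line hw tm.
by exists k => //; exact: ptk_on_line km hk et.
Qed.

Lemma gen_pair_off_A y (c : 'I_(m.*2).+1) : vert y -> (c = y.1 \/ c = y.2) ->
  c \notin A -> exists2 q, q \in F & gen_pair y q.
Proof.
move=> vy ec cA.
have c_gt0 : 0 < c.
  by case/andP: vy => /andP [y1 y12] _; case: ec => ->; [|exact: leq_trans y12].
have [k km hk] := path_meets (antipode_mem hA c_gt0 cA).
have ebc : c + antipode c = (m.*2).+1 by rewrite antipodeE // subnKC // ltnW.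
exists (ptk A w k); first exact: ptk_mem.
rewrite gen_pair_vert ?ptk_vert //.
by case: hk => e; case: ec => ec; rewrite e -ec ebc eqxx ?orbT.
Qed.

(* A point of [T_A] off the path is strictly comparable to the path point
   on its own diagonal [j - i = const]. *)
Lemma ptlt_on_A y : y.1 \in A -> y.2 \in A -> y.1 <= y.2 -> y \notin F ->
  exists2 q, q \in F & ptlt y q || ptlt q y.
Proof.
move=> y1A y2A y12 yF.
have [t1 t1m e1] := aA_surj hA y1A; have [t2 t2m e2] := aA_surj hA y2A.
have t12 : t1 <= t2 by rewrite -(aA_leE hA t1m t2m) e1 e2.
have [k km ek] : exists2 k, k < m & k + (t2 - t1) = m.-1.
  by exists (m.-1 - (t2 - t1)); lia.
have pk := pcolE hw km.
exists (ptk A w k); first exact: ptk_mem.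
rewrite /ptlt ptk_fst ?ptk_snd // -e1 -e2 !aA_ltE ?(prow_lt hw) ?pcol_lt //.
case: (ltngtP (prow w k) t1) => h.
- by rewrite /= pk; lia.
- by rewrite /= pk; lia.
move: yF; rewrite (_ : y = ptk A w k) ?ptk_mem //.
apply: pt_val_inj; first by rewrite ptk_fst // -e1 h.
by rewrite ptk_snd // -e2 pk h; congr aA; lia.
Qed.

Lemma facet_path : facet F.
Proof.
split=> [|G fG FG]; first exact: face_path.
apply/eqP; rewrite eqEsubset FG andbT; apply/subsetP => y yG.
apply/negPn/negP => yF; have vy := face_vert fG yG.
have blocked q : q \in F -> gen_pair y q || gen_pair q y -> False.
  move=> qF g; case/andP: fG => _ /inK_sqmonP; apply.
  have qG := subsetP FG q qF; have yq : y != q by apply: contraNneq yF => ->.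
  by case/orP: g => g; [exists y, q | exists q, y; rewrite eq_sym].
case: (boolP (y.1 \in A)) => y1A; last first.
  by have [q qF g] := gen_pair_off_A vy (or_introl erefl) y1A; apply: (blocked q); rewrite ?g.
case: (boolP (y.2 \in A)) => y2A; last first.
  by have [q qF g] := gen_pair_off_A vy (or_intror erefl) y2A; apply: (blocked q); rewrite ?g.
have y12 : y.1 <= y.2 by case/andP: vy => /andP [].
have [q qF lt] := ptlt_on_A y1A y2A y12 yF; apply: (blocked q qF).
have vq : vert q by move/mem_path: qF => [k km ->]; exact: ptk_vert.
by case/orP: lt => lt; rewrite !gen_pair_vert // lt !orbT.
Qed.

End PathFacet.

Arguments ptk_snd {m A w} hA {k}.
Arguments ptk_snd_mem {m A w} hA {k}.
Arguments ptk_mem {m A w k}.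

Lemma ptk_eqE m (A : {set 'I_(m.*2).+1}) v w k l : inA A -> size v = m.-1 -> size w = m.-1 ->
  k < m -> l < m ->
  (ptk A v k == ptk A w l) = (prow v k == prow w l) && (pcol m v k == pcol m w l).
Proof.
move=> hA hv hw km lm; apply/eqP/andP => [e|[/eqP e1 /eqP e2]].
  split; apply/eqP.
    apply: (aA_inj hA (prow_lt hv km) (prow_lt hw lm)).
    by rewrite -(ptk_fst hA hv km) -(ptk_fst hA hw lm) e.
  apply: (aA_inj hA (pcol_lt v km) (pcol_lt w lm)).
  by rewrite -(ptk_snd hA km) -(ptk_snd hA lm) e.
apply: pt_val_inj; first by rewrite (ptk_fst hA hv km) (ptk_fst hA hw lm) e1.
by rewrite (ptk_snd hA km) (ptk_snd hA lm) e2.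
Qed.

(** * Chains lie on paths *)

Section Tracing.
Variables (r s : nat) (C : seq (nat * nat)).
Hypothesis hC : forall a b, (a, b) \in C -> r <= a <= b /\ b <= s.
Hypothesis chC : forall a b c d, (a, b) \in C -> (c, d) \in C -> ~~ ((a < c) && (b < d)).

Lemma positions_left_of_corner : has (fun p => (p.1 == r) && (p.2 < s)) C ->
  forall a b, (a, b) \in C -> (a, b) != (r, s) -> b < s.
Proof.
move=> /hasP [[c d] cdC /andP [/eqP /= c_r d_s]] a b abC ne.
have [/andP [ra ab] bs] := hC abC; rewrite ltn_neqAle bs andbT.
apply: contra ne => /eqP b_s; subst b; have := chC cdC abC; rewrite c_r d_s andbT -leqNgt => ar.
by rewrite (_ : a = r) //; apply/eqP; rewrite eqn_leq ar ra.
Qed.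

Lemma positions_below_corner : ~~ has (fun p => (p.1 == r) && (p.2 < s)) C ->
  forall a b, (a, b) \in C -> (a, b) != (r, s) -> r < a.
Proof.
move=> /hasPn noleft a b abC ne; have [/andP [ra ab] bs] := hC abC.
rewrite ltn_neqAle ra andbT; apply: contra ne => /eqP r_a; subst a.
have := noleft _ abC; rewrite /= eqxx /= -leqNgt => sb.
by rewrite (_ : b = s) //; apply/eqP; rewrite eqn_leq bs sb.
Qed.

End Tracing.

(* Greedy tracing: from [(r, s)] step left while some position of [C] remains
   in row [r] strictly left of column [s]; otherwise step down. *)
Lemma word_through_positions N r s (C : seq (nat * nat)) : r + N = s ->
  (forall a b, (a, b) \in C -> r <= a <= b /\ b <= s) ->
  (forall a b c d, (a, b) \in C -> (c, d) \in C -> ~~ ((a < c) && (b < d))) ->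
  exists2 u : seq bool, size u = N & forall a b, (a, b) \in C ->
    exists2 k, k <= N & r + prow u k = a /\ s - hsteps u k = b.
Proof.
elim: N r s C => [|N IH] r s C hrs hC chC.
  exists [::] => // a b /hC; exists 0 => //; rewrite prow0 hsteps0; lia.
pose C' := [seq p <- C | p != (r, s)].
have mem_C' a b : (a, b) \in C' = ((a, b) != (r, s)) && ((a, b) \in C) by rewrite mem_filter.
have chC' a b c d : (a, b) \in C' -> (c, d) \in C' -> ~~ ((a < c) && (b < d)).
  by rewrite !mem_C' => /andP [_ abC] /andP [_ cdC]; apply: chC.
case: (boolP (has (fun p => (p.1 == r) && (p.2 < s)) C)) => hleft.
  have hC' a b : (a, b) \in C' -> r <= a <= b /\ b <= s.-1.
    rewrite mem_C' => /andP [ne abC]; have [hab _] := hC _ _ abC.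
    by have := positions_left_of_corner hC chC hleft abC ne; split=> //; lia.
  have [u su hu] := IH r s.-1 C' ltac:(lia) hC' chC'.
  exists (true :: u) => [|a b abC]; first by rewrite /= su.
  case: (eqVneq (a, b) (r, s)) => [[-> ->]|ne].
    by exists 0; rewrite ?prow0 ?hsteps0 ?addn0 ?subn0.
  have [k kN [e1 e2]] := hu a b ltac:(by rewrite mem_C' ne).
  by exists k.+1; rewrite ?ltnS // prow_cons_S hsteps_cons_S /= add0n subnDA subn1.
have hC' a b : (a, b) \in C' -> r.+1 <= a <= b /\ b <= s.
  rewrite mem_C' => /andP [ne abC]; have [/andP [_ ab] bs] := hC _ _ abC.
  by rewrite (positions_below_corner hC hleft abC ne).
have [u su hu] := IH r.+1 s C' ltac:(lia) hC' chC'.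
exists (false :: u) => [|a b abC]; first by rewrite /= su.
case: (eqVneq (a, b) (r, s)) => [[-> ->]|ne].
  by exists 0; rewrite ?prow0 ?hsteps0 ?addn0 ?subn0.
have [k kN [e1 e2]] := hu a b ltac:(by rewrite mem_C' ne).
by exists k.+1; rewrite ?ltnS // prow_cons_S hsteps_cons_S /= add0n addnA addn1.
Qed.

Lemma chain_sub_path m (B : {set 'I_(m.*2).+1}) (T : {set pt m}) : 0 < m -> inA B ->
  (forall p, p \in T -> [/\ p.1 \in B, p.2 \in B & p.1 <= p.2]) -> chain T ->
  exists2 v, size v = m.-1 & T \subset path_set B v.
Proof.
move=> m_gt0 hB hT ch.
pose pos (p : pt m) := (index (val p.1) (sortA B), index (val p.2) (sortA B)).
have posP p : p \in T -> [/\ (pos p).1 < m, (pos p).2 < m,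
    aA B (pos p).1 = p.1 & aA B (pos p).2 = p.2].
  by case/hT => /(aA_index hB) [? ?] /(aA_index hB) [? ?].
pose C := [seq pos p | p <- enum T].
have hC a b : (a, b) \in C -> 0 <= a <= b /\ b <= m.-1.
  case/mapP => p; rewrite mem_enum => pT [-> ->].
  have [_ _ le12] := hT p pT; have := posP p pT; rewrite /= => -[a1 a2 e1 e2].
  by split; [rewrite /= -(aA_leE hB a1 a2) e1 e2 | lia].
have chC a b c d : (a, b) \in C -> (c, d) \in C -> ~~ ((a < c) && (b < d)).
  case/mapP => p; rewrite mem_enum => pT [-> ->].
  case/mapP => q; rewrite mem_enum => qT [-> ->].
  have := posP p pT; have := posP q qT; rewrite /= => -[b1 b2 f1 f2] [a1 a2 e1 e2].
  by rewrite -(aA_ltE hB a1 b1) -(aA_ltE hB a2 b2) e1 e2 f1 f2; apply: ch.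
have [v sv hv] := @word_through_positions m.-1 0 m.-1 C (add0n _) hC chC.
exists v => //; apply/subsetP => p pT.
have [a1 a2 e1 e2] := posP p pT.
have pC : pos p \in C by apply: map_f; rewrite mem_enum.
have [k km [r1 r2]] := hv _ _ pC; rewrite add0n in r1.
have km' : k < m by lia.
apply/mem_path; exists k => //; apply: pt_val_inj.
  by rewrite (ptk_fst hB sv km') r1 e1.
by rewrite (ptk_snd hB km') /pcol -/(hsteps v k) r2 e2.
Qed.

(** * Types of path points *)

Lemma turn0 m w : left_turn m w 0 = false /\ right_turn m w 0 = false.
Proof.
rewrite /left_turn /right_turn /=; case: (ltnP 1 m) => //= m2.
by rewrite (_ : (0 == m.-1) = false) //; apply/eqP; lia.
Qed.

Lemma isolated0 m w : isolated m w 0.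
Proof. by rewrite /isolated; have [-> ->] := turn0 m w. Qed.

Lemma turn_inner m w k : 0 < k -> k < m.-1 ->
  left_turn m w k = nth false w k.-1 && ~~ nth false w k /\
  right_turn m w k = ~~ nth false w k.-1 && nth false w k.
Proof.
move=> k0 km; rewrite /left_turn /right_turn k0 km (_ : (k == m.-1) = false) ?andbF ?orbF //.
by apply/eqP; lia.
Qed.

Lemma turn_last m w : 1 < m ->
  left_turn m w m.-1 = nth false w m.-2 /\ right_turn m w m.-1 = ~~ nth false w m.-2.
Proof. by move=> m2; rewrite /left_turn /right_turn ltnn m2 eqxx !andbF. Qed.

Lemma right_turn_entry m w k : 0 < k < m -> nth false w k.-1 = false ->
  k = m.-1 \/ nth false w k -> right_turn m w k.
Proof.
move=> /andP [k0 km] hin hout; case: (ltnP k m.-1) => kl.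
  by rewrite (turn_inner w k0 kl).2 hin; case: hout => [|->] //; lia.
have [ek m2] : k = m.-1 /\ 1 < m by lia.
by rewrite ek (turn_last w m2).2 -ek hin.
Qed.

Lemma left_turn_entry m w k : 0 < k < m -> nth false w k.-1 ->
  k = m.-1 \/ nth false w k = false -> left_turn m w k.
Proof.
move=> /andP [k0 km] hin hout; case: (ltnP k m.-1) => kl.
  by rewrite (turn_inner w k0 kl).1 hin; case: hout => [|->] //; lia.
have [ek m2] : k = m.-1 /\ 1 < m by lia.
by rewrite ek (turn_last w m2).1 -ek hin.
Qed.

Lemma left_turn_inv m w k : left_turn m w k ->
  [/\ 0 < k, k < m, nth false w k.-1 & k = m.-1 \/ nth false w k = false].
Proof.
case/orP => [/and4P [k0 km hin /negPf hout]|/and3P [m2 /eqP -> hin]].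
  by split=> //; [lia | right].
by split=> //; [lia | lia | left].
Qed.

Lemma right_turn_inv m w k : right_turn m w k ->
  [/\ 0 < k, k < m, nth false w k.-1 = false & k = m.-1 \/ nth false w k].
Proof.
case/orP => [/and4P [k0 km /negPf hin hout]|/and3P [m2 /eqP -> /negPf hin]].
  by split=> //; [lia | right].
by split=> //; [lia | lia | left].
Qed.

Lemma isolated_steps m w k : 0 < k -> k < m.-1 -> isolated m w k ->
  nth false w k.-1 = nth false w k.
Proof.
move=> k0 km; rewrite /isolated; have [-> ->] := turn_inner w k0 km.
by case: (nth false w k.-1); case: (nth false w k).
Qed.

Lemma left_turn_not_right m w k : left_turn m w k -> ~~ right_turn m w k.
Proof.
rewrite /left_turn /right_turn.
by case: (nth false w k.-1); case: (nth false w k); rewrite /= ?andbF ?orbF.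
Qed.

Section PointTypes.
Variables (m : nat) (A : {set 'I_(m.*2).+1}) (w : seq bool).
Hypotheses (hA : inA A) (hw : size w = m.-1).

Local Notation nw k := (nth false w k).
Local Notation F := (path_set A w).

Lemma rowi_le_coli k : k < m -> rowi A w k <= coli A w k.
Proof. by move=> km; apply: aA_le (prow_le_pcol hw km) (pcol_lt w km). Qed.

Lemma is_index_coord k c : is_index A w k c -> rowi A w k = c \/ coli A w k = c.
Proof. by case/andP => /orP [] /eqP; [left|right]. Qed.

Lemma is_index_forall k c l : is_index A w k c -> l < m -> l != k ->
  rowi A w l != c /\ coli A w l != c.
Proof.
by case/andP => _ /forallP /(_ (Ordinal (_ : l < m))) h lm lk; move: (h lm); rewrite /= lk => /andP.
Qed.

Lemma is_index_col_shared k l c : is_index A w k c -> l < m -> l != k ->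
  pcol m w l = pcol m w k -> rowi A w k = c.
Proof.
move=> ix lm lk e; have [_ r] := is_index_forall ix lm lk.
by case: (is_index_coord ix) => // rc; move: r; rewrite /coli e -/(coli A w k) rc eqxx.
Qed.

Lemma is_index_aA k x : k < m -> x < m -> prow w k = x \/ pcol m w k = x ->
  (forall l, l < m -> l != k -> prow w l != x /\ pcol m w l != x) ->
  is_index A w k (aA A x).
Proof.
move=> km xm hk hl; apply/andP; split.
  by case: hk => <-; rewrite /rowi /coli eqxx ?orbT.
apply/forallP => l; apply/implyP => lk; have [r c] := hl l (ltn_ord l) lk.
rewrite /rowi /coli; apply/andP; split; apply/eqP.
  by move/(aA_inj hA (prow_lt hw (ltn_ord l)) xm); apply/eqP.
by move/(aA_inj hA (pcol_lt w (ltn_ord l)) xm); apply/eqP.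
Qed.

Lemma col_index k : k < m.-1 -> nw k -> (k = 0 \/ nw k.-1) ->
  is_index A w k (coli A w k).
Proof.
move=> km hk hin; apply: is_index_aA; [lia | apply: pcol_lt; lia | by right |].
move=> l lm lk; have [_ c1] := step_h hw km hk; have := pcol_gt0 hw km.
have := prow_last hw; have := @prow_mono w l m.-1 ltac:(lia).
have := @pcol_mono m w k.+1 m.-1 km.
case: (ltngtP l k) => [lk'||/eqP]; last by rewrite (negbTE lk).
  case: hin => [k0|hin]; first lia.
  have [_ c0] := step_h hw (k := k.-1) ltac:(lia) hin; rewrite prednK in c0; last lia.
  by have := @pcol_mono m w l k.-1 ltac:(lia); lia.
by move=> kl; have := @pcol_mono m w k.+1 l kl; lia.
Qed.

Lemma row_index k : k < m.-1 -> nw k = false -> (k = 0 \/ nw k.-1 = false) ->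
  is_index A w k (rowi A w k).
Proof.
move=> km hk hin; apply: is_index_aA; [lia | apply: (prow_lt hw); lia | by left |].
move=> l lm lk; have [r1 _] := step_v hw km hk.
have := prow_last hw; have := @pcol_mono m w l m.-1 ltac:(lia).
have := @prow_mono w k.+1 m.-1 km.
case: (ltngtP l k) => [lk'||/eqP]; last by rewrite (negbTE lk).
  case: hin => [k0|hin]; first lia.
  have [r0 _] := step_v hw (k := k.-1) ltac:(lia) hin; rewrite prednK in r0; last lia.
  by have := @prow_mono w l k.-1 ltac:(lia); lia.
by move=> kl; have := @prow_mono w k.+1 l kl; lia.
Qed.

Lemma single_point_index : m = 1 -> is_index A w 0 (rowi A w 0).
Proof.
move=> m1; apply: is_index_aA; [lia | rewrite prow0; lia | by left | lia].
Qed.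

Definition minus_point k := right_turn m w k ||
  (isolated m w k && [exists c : 'I_(m.*2).+1, [&& c \in A, m < c & is_index A w k c]]).

Lemma ptk_minusE k : k < m -> (ptk A w k \in minus_set A w) = minus_point k.
Proof.
move=> km; rewrite inE; apply/existsP/idP => [[l /andP [/eqP e h]]|h].
  by rewrite (ptk_inj hA hw km (ltn_ord l) e).
by exists (Ordinal km); rewrite eqxx.
Qed.

Lemma ptk_plusE k : k < m -> (ptk A w k \in plus_set A w) = ~~ minus_point k.
Proof. by move=> km; rewrite inE ptk_minusE // ptk_mem // andbT. Qed.

Lemma minus_sub_path : minus_set A w \subset F.
Proof. by apply/subsetP => x; rewrite inE => /existsP [k /andP [/eqP -> _]]; apply: ptk_mem. Qed.

Lemma left_turn_plus k : k < m -> left_turn m w k -> ptk A w k \in plus_set A w.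
Proof.
move=> km lt; rewrite ptk_plusE // /minus_point /isolated lt.
by rewrite (negbTE (left_turn_not_right lt)).
Qed.

Lemma isolated_minus k x : k < m -> x < m -> isolated m w k ->
  is_index A w k (aA A x) -> m < aA A x -> ptk A w k \in minus_set A w.
Proof.
move=> km xm iso ix mx; rewrite ptk_minusE // /minus_point iso; apply/orP; right.
by have [c cA ec] := aA_mem hA xm; apply/existsP; exists c; rewrite cA ec mx.
Qed.

Lemma small_indices_plus k : k < m -> ~~ right_turn m w k ->
  (isolated m w k -> forall c, is_index A w k c -> c <= m) -> ptk A w k \in plus_set A w.
Proof.
move=> km nr small; rewrite ptk_plusE // /minus_point (negbTE nr) /=.
apply/andP => -[iso /existsP [c /and3P [_ mc ic]]].
by have := small iso c ic; lia.
Qed.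

Lemma row_entry_minus k : k < m -> (k = 0 \/ nw k.-1 = false) -> m < rowi A w k ->
  ptk A w k \in minus_set A w.
Proof.
move=> km hin big; have pk := prow_lt hw km.
case: (ltnP 1 m) => m2; last first.
  have [m1 k0] : m = 1 /\ k = 0 by lia.
  by subst k; apply: isolated_minus (isolated0 m w) (single_point_index m1) big.
case: (ltnP k m.-1) => kl; last first.
  have ek : k = m.-1 by lia.
  case: hin => [|hin]; first lia.
  by rewrite ptk_minusE // /minus_point ek (turn_last w m2).2 -ek hin.
case hn: (nw k).
  case: hin => [k0|hin]; last first.
    case: (posnP k) => [k0|k_gt0]; first by move: hin hn; rewrite k0 /= => ->.
    by rewrite ptk_minusE // /minus_point (turn_inner w k_gt0 kl).2 hin hn.
  subst k; apply: isolated_minus (isolated0 m w) (col_index kl hn (or_introl erefl)) _ => //.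
    exact: pcol_lt.
  exact: leq_trans big (rowi_le_coli km).
apply: isolated_minus pk _ (row_index kl hn hin) big => //.
case: (posnP k) => [->|k_gt0]; first exact: isolated0.
case: hin => [k0|hin]; first lia.
by rewrite /isolated; have [-> ->] := turn_inner w k_gt0 kl; rewrite hin hn.
Qed.

Lemma col_exit_minus k : k < m.-1 -> nw k -> m < coli A w k ->
  ptk A w k \in minus_set A w.
Proof.
move=> kl hn big; have km : k < m by lia.
have isolated_col : (k = 0 \/ nw k.-1) -> isolated m w k -> ptk A w k \in minus_set A w.
  by move=> hin iso; apply: isolated_minus (pcol_lt w km) iso (col_index kl hn hin) big.
case: (posnP k) => [k0|k_gt0]; first by apply: isolated_col; [left | rewrite k0; exact: isolated0].
have [l1 r1] := turn_inner w k_gt0 kl.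
case hin: (nw k.-1); first by apply: isolated_col; [right | rewrite /isolated l1 r1 hin hn].
by rewrite ptk_minusE // /minus_point r1 hin hn.
Qed.

(* A path point lies weakly above the diagonal, so every index of it is at most its column. *)
Lemma col_entry_plus k : k < m -> (k = 0 \/ nw k.-1) -> coli A w k <= m ->
  ptk A w k \in plus_set A w.
Proof.
move=> km hin small; apply: small_indices_plus => // [|_ c /is_index_coord [] <- //].
  case: (posnP k) => [->|k_gt0]; first by rewrite (turn0 m w).2.
  case: hin => [|hin]; first lia.
  case: (ltnP k m.-1) => kl; first by rewrite (turn_inner w k_gt0 kl).2 hin.
  have [ek m2] : k = m.-1 /\ 1 < m by lia.
  by rewrite ek (turn_last w m2).2 -ek hin.
exact: leq_trans (rowi_le_coli km) small.
Qed.

Lemma row_exit_plus k : k < m.-1 -> nw k = false -> rowi A w k <= m ->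
  ptk A w k \in plus_set A w.
Proof.
move=> kl hn small; have km : k < m by lia.
apply: small_indices_plus => // [|_ c ix].
  case: (posnP k) => [->|k_gt0]; first by rewrite (turn0 m w).2.
  by rewrite (turn_inner w k_gt0 kl).2 hn andbF.
have [_ sc] := step_v hw kl hn.
have [kS Sk] : k.+1 < m /\ k.+1 != k by split; [lia | rewrite neq_ltn ltnSn orbT].
by rewrite -(is_index_col_shared ix kS Sk sc).
Qed.

Lemma exists_minus_on_line t : t < m -> m < aA A t ->
  exists2 k, k < m & (prow w k = t \/ pcol m w k = t) /\ ptk A w k \in minus_set A w.
Proof.
move=> tm big; case: (leqP t (prow w m.-1)) => ht.
  have [k km [pk hin]] := row_entry hw tm ht.
  by exists k => //; split; [left | apply: row_entry_minus; rewrite // /rowi pk].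
have ht' : pcol m w m.-1 < t by rewrite -(prow_last hw).
have [k kl [pk hn]] := col_exit hw tm ht'.
exists k; first lia.
by split; [right | apply: col_exit_minus; rewrite // /coli pk].
Qed.

Lemma exists_plus_on_line t : t < m -> aA A t <= m ->
  exists2 k, k < m & (prow w k = t \/ pcol m w k = t) /\ ptk A w k \in plus_set A w.
Proof.
move=> tm small; case: (leqP (pcol m w m.-1) t) => ht.
  have [k km [pk hin]] := col_entry hw ht tm.
  by exists k => //; split; [right | apply: col_entry_plus; rewrite // /coli pk].
have ht' : t < prow w m.-1 by rewrite (prow_last hw).
have [k kl [pk hn]] := row_exit hw ht'.
exists k; first lia.
by split; [left | apply: row_exit_plus; rewrite // /rowi pk].
Qed.

End PointTypes.

(** * Earlier facets miss [F^-], later ones miss [F^+] *)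

(* At the first index [d] where [A] and [B] differ, [a := a_d < b_d]; then
   [a] is not in [B], and its antipode lies in [B] but not in [A] and
   exceeds [a], hence [m]. *)
Lemma lexlt_antipodes m (A B : {set 'I_(m.*2).+1}) : inA A -> inA B -> lexlt A B ->
  exists a c : 'I_(m.*2).+1,
    [/\ a \in A :\: B, c \in B :\: A, a + c = (m.*2).+1 & m < c].
Proof.
move=> hA hB [d [dm pre lt]].
have [a a_A ea] := aA_mem hA dm.
have a_nB : a \notin B.
  apply/negP => /(aA_surj hB) [t tm et]; case: (ltnP t d) => td.
    by have := aA_lt hA td dm; rewrite pre // et ea ltnn.
  by have := aA_le hB td tm; rewrite et ea leqNgt lt.
have c_B := antipode_mem hB (inA_gt0 hA a_A) a_nB.
have c_nA := antipode_notin hA a_A.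
have eca : a + antipode a = (m.*2).+1 by rewrite antipodeE ?(inA_gt0 hA) // subnKC // ltnW.
move: (antipode a) c_B c_nA eca => c c_B c_nA eca.
exists a, c; rewrite !inE a_A a_nB c_nA c_B eca; split=> //.
case: (ltngtP c a) => ca; [|lia|by move: eca; rewrite ca; lia].
have [t tm et] := aA_surj hB c_B.
have td : t < d by rewrite -(aA_ltE hB tm dm) et; lia.
by move: c_nA; rewrite (aA_eq_mem hA tm (_ : aA A t = c)) // pre.
Qed.

Lemma lexlt_total m (A B : {set 'I_(m.*2).+1}) : inA A -> inA B -> A <> B ->
  lexlt A B \/ lexlt B A.
Proof.
move=> hA hB neAB.
case: (boolP [exists l : 'I_m, aA A l != aA B l]) => [/existsP [l0 hl0]|/existsPn eqAB].
  have exP : exists l, (l < m) && (aA A l != aA B l) by exists l0; rewrite ltn_ord.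
  case: (ex_minnP exP) => k /andP [km hk] mink.
  have pre l : l < k -> aA A l = aA B l.
    move=> lk; have lm : l < m by lia.
    by apply/eqP; apply: contraTT lk => ne; rewrite -leqNgt; apply: mink; rewrite lm.
  case: (ltngtP (aA A k) (aA B k)) => h; last by move: hk; rewrite h eqxx.
    by left; exists k.
  by right; exists k; split=> // l /pre.
have e l : l < m -> aA A l = aA B l.
  by move=> lm; apply/eqP; rewrite -[_ == _]negbK (eqAB (Ordinal lm)).
exfalso; apply: neAB; apply/setP => c; apply/idP/idP => cX.
  by have [t tm et] := aA_surj hA cX; apply: (aA_eq_mem hB tm); rewrite -e.
by have [t tm et] := aA_surj hB cX; apply: (aA_eq_mem hA tm); rewrite e.
Qed.

Lemma stdlt_total m v w : size v = m.-1 -> size w = m.-1 -> v <> w ->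
  stdlt m v w \/ stdlt m w v.
Proof.
move=> hv hw nevw.
case: (boolP [exists i : 'I_m.-1, nth false v i != nth false w i])
  => [/existsP [i0 hi0]|/existsPn eqvw].
  have exP : exists i, (i < m.-1) && (nth false v i != nth false w i) by exists i0; rewrite ltn_ord.
  case: (ex_minnP exP) => k /andP [km hk] mink.
  have tk : take k v = take k w.
    apply: (eq_from_nth (x0 := false)); first by rewrite !size_takel ?hv ?hw //; lia.
    move=> i; rewrite size_takel ?hv; last lia.
    move=> ik; have im : i < m.-1 by lia.
    rewrite !nth_take //; apply/eqP; apply: contraTT ik => ne.
    by rewrite -leqNgt; apply: mink; rewrite im.
  case hvk: (nth false v k); case hwk: (nth false w k); rewrite hvk hwk // in hk.
    by left; exists k.
  by right; exists k.
exfalso; apply: nevw; apply: (eq_from_nth (x0 := false)); first by rewrite hv hw.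
by move=> i; rewrite hv => im; apply/eqP; rewrite -[_ == _]negbK (eqvw (Ordinal im)).
Qed.

Section Separation.
Variables (m : nat) (A : {set 'I_(m.*2).+1}) (w : seq bool).
Hypotheses (hA : inA A) (hw : size w = m.-1).

(* Where [v] first turns left while [w] goes down, [w] reaches a right turn
   at the end of its vertical run, which [v] never visits. *)
Lemma stdlt_misses_minus v : size v = m.-1 -> stdlt m v w ->
  exists2 x, x \in minus_set A w & x \notin path_set A v.
Proof.
move=> hv [k [kl tk vk wk]].
have [j /andP [kj jl] [jend run]] := run_end hw kl wk.
have [r1 c1] := run_v hw (k := k) (d := j - k) ltac:(lia) (fun i hi => run i ltac:(lia)).
rewrite subnKC in r1 c1; last lia.
exists (ptk A w j).
  rewrite (ptk_minusE hA hw); last lia.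
  apply/orP; left; apply: right_turn_entry; first lia.
    by apply: run; lia.
  by case: jend => [|->]; [left | right].
apply/negP => /mem_path [l lm]; move/eqP; rewrite eq_sym ptk_eqE //; last lia.
case/andP => /eqP e1 /eqP e2; have [pk ck] := prow_take_eq tk (leqnn k).
case: (leqP l k) => lk; first by have := prow_mono v lk; lia.
have [_ s2] := step_h hv kl vk; have := @pcol_mono m v k.+1 l lk.
by have := pcol_gt0 hv kl; rewrite ck in s2 *; lia.
Qed.

(* Symmetrically, [w] reaches a left turn at the end of its horizontal run. *)
Lemma stdlt_misses_plus v : size v = m.-1 -> stdlt m w v ->
  exists2 x, x \in plus_set A w & x \notin path_set A v.
Proof.
move=> hv [k [kl tk wk vk]].
have [j /andP [kj jl] [jend run]] := run_end hw kl wk.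
have [r1 c1] := run_h hw (k := k) (d := j - k) ltac:(lia) (fun i hi => run i ltac:(lia)).
rewrite subnKC in r1 c1; last lia.
have jc : j - k <= pcol m w k.
  have := prow_le_pcol hw (k := j) ltac:(lia).
  by rewrite r1 c1 (pcolE hw (k := k)); lia.
exists (ptk A w j).
  apply: (left_turn_plus hA hw); first lia.
  apply: left_turn_entry; first lia.
    by apply: run; lia.
  by case: jend => [|/negPf ->]; [left | right].
apply/negP => /mem_path [l lm]; move/eqP; rewrite eq_sym ptk_eqE //; last lia.
case/andP => /eqP e1 /eqP e2; have [pk ck] := prow_take_eq (esym tk) (leqnn k).
case: (leqP l k) => lk; first by have := @pcol_mono m v l k lk; rewrite ck; lia.
have [s1 _] := step_v hv kl vk; have := @prow_mono v k.+1 l lk; lia.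
Qed.

Lemma lexlt_misses_minus B v : inA B -> size v = m.-1 -> lexlt B A ->
  exists2 x, x \in minus_set A w & x \notin path_set B v.
Proof.
move=> hB hv /(lexlt_antipodes hB hA) [b [c [_ /setDP [c_A c_nB] _ big]]].
have [t tm et] := aA_surj hA c_A.
have big' : m < aA A t by rewrite et.
have [k km [hk kminus]] := exists_minus_on_line hA hw tm big'.
have ec := ptk_on_line hA hw km hk et.
exists (ptk A w k) => //; apply: contra c_nB => /(path_mem_coord hB hv) [].
by case: ec => ->.
Qed.

Lemma lexlt_misses_plus B v : inA B -> size v = m.-1 -> lexlt A B ->
  exists2 x, x \in plus_set A w & x \notin path_set B v.
Proof.
move=> hB hv /(lexlt_antipodes hA hB) [a [c [/setDP [a_A a_nB] _ eac big]]].
have [t tm et] := aA_surj hA a_A.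
have small : aA A t <= m by rewrite et; lia.
have [k km [hk kplus]] := exists_plus_on_line hA hw tm small.
have ea := ptk_on_line hA hw km hk et.
exists (ptk A w k) => //; apply: contra a_nB => /(path_mem_coord hB hv) [].
by case: ea => ->.
Qed.

End Separation.

(** * Replacing a point of a path *)

Definition incomparable m (p q : pt m) := ~~ ptlt p q && ~~ ptlt q p.

Lemma not_ptlt m (p q : pt m) : ~~ ptlt p q -> p.1 < q.1 -> q.2 <= p.2.
Proof. by move=> h lt1; rewrite leqNgt; apply: contra h => lt2; rewrite /ptlt lt1 lt2. Qed.

Lemma incomparableP m (p y : pt m) :
  (p.1 < y.1 -> y.2 <= p.2) -> (y.1 < p.1 -> p.2 <= y.2) -> incomparable p y.
Proof.
move=> h1 h2; apply/andP; split; apply/negP => /andP [a b].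
  by have := h1 a; rewrite leqNgt b.
by have := h2 a; rewrite leqNgt b.
Qed.

Section Crossing.
Variables (m : nat) (S : {set pt m}) (C : {set 'I_(m.*2).+1}) (z : 'I_(m.*2).+1).
Hypothesis chS : chain S.
Hypothesis hS : {in S, forall p : pt m, p.1 <= p.2 /\ (p.1 \in C /\ p.2 \in C)}.
Hypothesis zC : z \in C.

Let crossing_point (y : pt m) :=
  [/\ y.1 = z \/ y.2 = z, y.1 \in C /\ y.2 \in C, y.1 <= y.2 &
      {in S, forall p : pt m, incomparable p y}].

Lemma crossing_row q : q \in S -> q.1 <= z <= q.2 ->
  {in S, forall p : pt m, p.1 <= z -> q.2 <= p.2} -> crossing_point (z, q.2).
Proof.
move=> qS /andP [q1 q2] qmin; have [_ [_ qC]] := hS qS.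
split=> //=; [by left | move=> p pS; apply: incomparableP => /= h].
  by apply: qmin; rewrite // ltnW.
by apply: (not_ptlt (chS qS pS)); exact: leq_ltn_trans q1 h.
Qed.

Lemma crossing_col q : q \in S -> q.1 <= z <= q.2 ->
  {in S, forall p : pt m, z <= p.2 -> p.1 <= q.1} -> crossing_point (q.1, z).
Proof.
move=> qS /andP [q1 q2] qmax; have [_ [qC _]] := hS qS.
split=> //=; [by right | move=> p pS; apply: incomparableP => /= h].
  exact: leq_trans q2 (not_ptlt (chS pS qS) h).
by rewrite leqNgt; apply/negP => zp; have := qmax p pS (ltnW zp); rewrite leqNgt h.
Qed.

(* Try [(z, q.2)] with [q.2] the lowest column among the points in rows [<= z],
   then [(q'.1, z)] with [q'.1] the largest row among the points in columns
   [>= z]; if both fail, [q] and [q'] are strictly comparable. *)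
Lemma crossing : exists y, crossing_point y.
Proof.
case: (set_0Vmem S) => [S0|[p0 p0S]].
  by exists (z, z); split=> //=; [left | move=> p; rewrite S0 inE].
pose R := [set p in S | p.1 <= z]; pose R' := [set p in S | z <= p.2].
case: (set_0Vmem R) => [R0|[q0 q0R]].
  have above p : p \in S -> z < p.1.
    by move=> pS; rewrite ltnNge; apply/negP => pz; have := in_set0 p; rewrite -R0 inE pS pz.
  have [pM pMS maxM] := @arg_maxnP _ p0 (fun p : pt m => p \in S) (fun p : pt m => p.2) p0S.
  exists (z, pM.2); have [pM12 [_ pMC]] := hS pMS.
  split=> //=; [by left | exact: ltnW (leq_trans (above _ pMS) pM12) |].
  move=> p pS; apply: incomparableP => /= h; last exact: maxM.
  by have := above _ pS; rewrite ltnNge (ltnW h).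
have [q qR qmin] := @arg_minnP _ q0 (fun p : pt m => p \in R) (fun p : pt m => p.2) q0R.
move: qR; rewrite inE => /andP [qS qz].
case: (leqP z q.2) => zq.
  by exists (z, q.2); apply: crossing_row; rewrite ?qz // => p pS pz; apply: qmin; rewrite inE pS.
case: (set_0Vmem R') => [R0'|[q1 q1R]].
  have below p : p \in S -> p.2 < z.
    by move=> pS; rewrite ltnNge; apply/negP => pz; have := in_set0 p; rewrite -R0' inE pS pz.
  have [pm pmS minm] := @arg_minnP _ p0 (fun p : pt m => p \in S) (fun p : pt m => p.1) p0S.
  exists (pm.1, z); have [pm12 [pmC _]] := hS pmS.
  split=> //=; [by right | exact: ltnW (leq_ltn_trans pm12 (below _ pmS)) |].
  move=> p pS; apply: incomparableP => /= h; last exact: ltnW (below _ pS).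
  by have := minm _ pS; rewrite leqNgt h.
have [q' q'R q'max] := @arg_maxnP _ q1 (fun p : pt m => p \in R') (fun p : pt m => p.1) q1R.
move: q'R; rewrite inE => /andP [q'S zq'].
case: (leqP q'.1 z) => q'z.
  exists (q'.1, z); apply: crossing_col; rewrite ?q'z // => p pS pz.
  by apply: q'max; rewrite inE pS.
by have := not_ptlt (chS qS q'S) (leq_ltn_trans qz q'z); rewrite leqNgt (leq_trans zq zq').
Qed.

End Crossing.

Section Replacement.
Variables (m : nat) (A : {set 'I_(m.*2).+1}) (w : seq bool).
Hypotheses (hA : inA A) (hw : size w = m.-1).

Local Notation F := (path_set A w).
Local Notation nw k := (nth false w k).

Definition replaceable (x : pt m) := exists B v,
  [/\ inA B, size v = m.-1, F :\ x \subset path_set B v & path_set B v != F].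

Lemma replaceable_by x (B : {set 'I_(m.*2).+1}) (y : pt m) : 0 < m -> inA B ->
  {in F :\ x, forall p : pt m, p.1 \in B /\ p.2 \in B} ->
  y.1 \in B -> y.2 \in B -> y.1 <= y.2 ->
  {in F :\ x, forall p, incomparable p y} -> y \notin F -> replaceable x.
Proof.
move=> m_gt0 hB FB y1 y2 y12 yinc yF.
have hT p : p \in y |: (F :\ x) -> [/\ p.1 \in B, p.2 \in B & p.1 <= p.2].
  rewrite in_setU1 => /orP [/eqP -> //|pS]; have [p1 p2] := FB p pS.
  by move: pS => /setD1P [_ /mem_path [k km ekp]]; split=> //; rewrite ekp (ptk_le hA hw).
have chT : chain (y |: (F :\ x)).
  move=> p q; rewrite !in_setU1 => /orP [/eqP ->|pS] /orP [/eqP ->|qS].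
  - by rewrite /ptlt ltnn.
  - by case/andP: (yinc q qS).
  - by case/andP: (yinc p pS).
  - by case/setD1P: pS => _ pF; case/setD1P: qS => _ qF; exact: (path_chain hA hw).
have [v hv sub] := chain_sub_path m_gt0 hB hT chT.
exists B, v; split=> //; first exact: subset_trans (subsetUr _ _) sub.
by apply: contraNneq yF => <-; apply: (subsetP sub); rewrite setU11.
Qed.

Lemma replaceable_at k a b : k < m -> a <= b -> b < m ->
  (forall l, l < m -> l != k ->
     (prow w l < a -> b <= pcol m w l) /\ (a < prow w l -> pcol m w l <= b)) ->
  (forall l, l < m -> prow w l != a \/ pcol m w l != b) -> replaceable (ptk A w k).
Proof.
move=> km ab bm hinc hne; have am : a < m by lia.
have [c1 c1A e1] := aA_mem hA am; have [c2 c2A e2] := aA_mem hA bm.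
apply: (@replaceable_by _ A (c1, c2)) => //=; first lia.
- by move=> p /setD1P [_ /(path_mem_coord hA hw)].
- by rewrite e1 e2 aA_le.
- move=> p /setD1P [px /mem_path [l lm el]]; subst p.
  have lk : l != k by apply: contraNneq px => ->.
  have [h1 h2] := hinc l lm lk.
  apply: incomparableP; rewrite /= (ptk_fst hA hw lm) (ptk_snd hA lm) e1 e2.
    by rewrite aA_ltE ?aA_leE ?(prow_lt hw lm) ?(pcol_lt w lm).
  by rewrite aA_ltE ?aA_leE ?(prow_lt hw lm) ?(pcol_lt w lm).
apply/negP => /mem_path [l lm el].
move: (congr1 (fun p : pt m => nat_of_ord p.1) el).
move: (congr1 (fun p : pt m => nat_of_ord p.2) el).
rewrite /= (ptk_fst hA hw lm) (ptk_snd hA lm) e1 e2.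
move=> /(aA_inj hA bm (pcol_lt w lm)) f2 /(aA_inj hA am (prow_lt hw lm)) f1.
by case: (hne l lm); rewrite ?f1 ?f2 eqxx.
Qed.

(* Flipping a left turn moves it one step down and one step right. *)
Lemma left_turn_replaceable k : left_turn m w k -> replaceable (ptk A w k).
Proof.
case/left_turn_inv => k0 km hin hout.
have [r0 c0] := step_h hw (k := k.-1) ltac:(lia) hin; rewrite prednK // in r0 c0.
have := pcol_gt0 hw (k := k.-1) ltac:(lia); have := pcol_lt w (m := m) (k := k.-1) ltac:(lia).
have := prow_le_pcol hw km => rc cm pc.
apply: (replaceable_at (a := (prow w k).+1) (b := (pcol m w k).+1) km); try lia.
  move=> l lm lk; case: (ltngtP l k) => [lk'|kl|e]; last by rewrite e eqxx in lk.
    by have := @prow_mono w l k.-1 ltac:(lia); have := @pcol_mono m w l k.-1 ltac:(lia); lia.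
  case: hout => [|hout]; first lia.
  have [r1 _] := step_v hw (k := k) ltac:(lia) hout.
  by have := @prow_mono w k.+1 l kl; have := @pcol_mono m w k l (ltnW kl); lia.
move=> l lm; case: (ltngtP l k) => [lk|kl|->]; [left | right | left]; apply/eqP; try lia.
  by have := @prow_mono w l k.-1 ltac:(lia); lia.
by have := @pcol_mono m w k l (ltnW kl); lia.
Qed.

(* Flipping a right turn moves it one step up and one step left. *)
Lemma right_turn_replaceable k : right_turn m w k -> replaceable (ptk A w k).
Proof.
case/right_turn_inv => k0 km hin hout.
have [r0 c0] := step_v hw (k := k.-1) ltac:(lia) hin; rewrite prednK // in r0 c0.
have := pcol_lt w km; have := prow_le_pcol hw km => rc cm.
apply: (replaceable_at (a := (prow w k).-1) (b := (pcol m w k).-1) km); try lia.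
  move=> l lm lk; case: (ltngtP l k) => [lk'|kl|e]; last by rewrite e eqxx in lk.
    by have := @prow_mono w l k.-1 ltac:(lia); have := @pcol_mono m w l k.-1 ltac:(lia); lia.
  case: hout => [|hout]; first lia.
  have [_ c1] := step_h hw (k := k) ltac:(lia) hout.
  by have := @prow_mono w k l (ltnW kl); have := @pcol_mono m w k.+1 l kl; lia.
move=> l lm; case: (ltngtP l k) => [lk|kl|->]; [right | left | left]; apply/eqP; try lia.
  by have := @pcol_mono m w l k.-1 ltac:(lia); lia.
by have := @prow_mono w k l (ltnW kl); lia.
Qed.

Lemma isolated_index k : k < m -> isolated m w k ->
  exists2 c : 'I_(m.*2).+1, c \in A & is_index A w k c.
Proof.
move=> km iso.
have index_of x : x < m -> is_index A w k (aA A x) ->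
    exists2 c : 'I_(m.*2).+1, c \in A & is_index A w k c.
  by move=> xm ix; have [c cA ec] := aA_mem hA xm; exists c; rewrite // ec.
case: (ltnP 1 m) => m2; last first.
  have [m1 k0] : m = 1 /\ k = 0 by lia.
  by subst k; apply: index_of (prow_lt hw km) (single_point_index hA hw m1).
case: (ltnP k m.-1) => kl; last first.
  have ek : k = m.-1 by lia.
  move: iso; rewrite /isolated ek.
  by have [-> ->] := turn_last w m2; case: (nth _ _ _).
have same : k = 0 \/ nw k.-1 = nw k.
  by case: (posnP k) => [k0|k_gt0]; [left | right; exact: isolated_steps k_gt0 kl iso].
case hn: (nw k).
  apply: index_of (pcol_lt w km) (col_index hA hw kl hn _).
  by case: same => [|e]; [left | right; rewrite e hn].
apply: index_of (prow_lt hw km) (row_index hA hw kl hn _).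
by case: same => [|e]; [left | right; rewrite e hn].
Qed.

(* Replace the index [c] of the point by its antipode [c'], which is in no
   position of [F], and cross the remaining chain with the lines of [c']. *)
Lemma index_replaceable k (c : 'I_(m.*2).+1) : k < m -> c \in A -> is_index A w k c ->
  replaceable (ptk A w k).
Proof.
move=> km cA ix; set B := antipode c |: (A :\ c).
have FB : {in F :\ ptk A w k, forall p : pt m, p.1 \in B /\ p.2 \in B}.
  move=> p /setD1P [px /mem_path [l lm el]]; subst p.
  have lk : l != k by apply: contraNneq px => ->.
  have [r c0] := is_index_forall ix lm lk.
  rewrite !in_setU1 !in_setD1 (ptk_fst_mem hA hw lm) (ptk_snd_mem hA lm) !andbT.
  split; apply/orP; right; apply/eqP => e.
    by move: r; rewrite /rowi -(ptk_fst hA hw lm) e eqxx.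
  by move: c0; rewrite /coli -(ptk_snd hA lm) e eqxx.
have chS : chain (F :\ ptk A w k).
  by move=> p q /setD1P [_ pF] /setD1P [_ qF]; exact: (path_chain hA hw).
have hS : {in F :\ ptk A w k, forall p : pt m, p.1 <= p.2 /\ (p.1 \in B /\ p.2 \in B)}.
  move=> p pS; split; last exact: FB.
  by case/setD1P: pS => _ /mem_path [l lm ->]; exact: (ptk_le hA hw).
have [y [yc' [y1 y2] y12 yinc]] := crossing chS hS (setU11 _ _).
apply: (replaceable_by (B := B) (y := y)) => //; [lia | exact: inA_swap |].
apply: contra (antipode_notin hA cA) => /(path_mem_coord hA hw) [].
by case: yc' => <-.
Qed.

Lemma replaceable_path x : x \in F -> replaceable x.
Proof.
case/mem_path => k km ->.
case lt: (left_turn m w k); first exact: left_turn_replaceable.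
case rt: (right_turn m w k); first exact: right_turn_replaceable.
have iso : isolated m w k by rewrite /isolated lt rt.
have [c cA ix] := isolated_index km iso.
exact: index_replaceable km cA ix.
Qed.

End Replacement.

(** * The shelling *)

Lemma subset_setD1 (T : finType) (X Y Z : {set T}) x :
  X \subset Y -> X \subset Z -> x \notin Z -> X \subset Y :\ x.
Proof.
move=> XY XZ xZ; apply/subsetP => y yX; rewrite in_setD1 (subsetP XY _ yX) andbT.
by apply: contraNneq xZ => <-; exact: (subsetP XZ).
Qed.

Lemma path_subset_inA m (A B : {set 'I_(m.*2).+1}) v w : inA A -> inA B ->
  size w = m.-1 -> size v = m.-1 -> path_set A w \subset path_set B v -> A \subset B.
Proof.
move=> hA hB hw hv sub; apply/subsetP => c cA.
have [k km hk] := path_meets hA hw cA.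
have [] := path_mem_coord hB hv (subsetP sub _ (ptk_mem km)).
by case: hk => ->.
Qed.

Lemma path_set_inj m (A B : {set 'I_(m.*2).+1}) v w : inA A -> inA B ->
  size w = m.-1 -> size v = m.-1 -> path_set A w = path_set B v -> A = B /\ w = v.
Proof.
move=> hA hB hw hv e.
have eAB : A = B.
  apply/eqP; rewrite eqEsubset (path_subset_inA hA hB hw hv) ?e //.
  by rewrite (path_subset_inA hB hA hv hw) ?e.
subst B; split=> //; case: (eqVneq w v) => // /eqP nwv; exfalso.
have misses u u' : size u = m.-1 -> size u' = m.-1 -> stdlt m u u' -> path_set A u <> path_set A u'.
  move=> hu hu' lt e'; have [x xm xu] := stdlt_misses_minus hA hu' hu lt.
  by move: xu; rewrite e' (subsetP (minus_sub_path A u') x xm).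
case: (stdlt_total hv hw (nesym nwv)) => lt; first exact: misses hv hw lt (esym e).
exact: misses hw hv lt e.
Qed.

Section Shelling.
Variables (m : nat) (A : {set 'I_(m.*2).+1}) (w : seq bool).
Hypotheses (hA : inA A) (hw : size w = m.-1).

Local Notation F := (path_set A w).

Lemma misses_minus_below B v : inA B -> size v = m.-1 ->
  lexlt B A \/ (B = A /\ stdlt m v w) ->
  exists2 x, x \in minus_set A w & x \notin path_set B v.
Proof.
move=> hB hv [lt|[-> lt]]; [exact: lexlt_misses_minus | exact: stdlt_misses_minus].
Qed.

Lemma misses_plus_above B v : inA B -> size v = m.-1 ->
  lexlt A B \/ (B = A /\ stdlt m w v) ->
  exists2 x, x \in plus_set A w & x \notin path_set B v.
Proof.
move=> hB hv [lt|[-> lt]]; [exact: lexlt_misses_plus | exact: stdlt_misses_plus].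
Qed.

(* Replacing a point of [F^-] must give an earlier facet, since every later
   facet misses a point of [F^+]. *)
Lemma minus_replacement_below x : x \in minus_set A w ->
  exists B v, [/\ inA B, size v = m.-1, F :\ x \subset path_set B v &
                  lexlt B A \/ (B = A /\ stdlt m v w)].
Proof.
move=> xm; have xF := subsetP (minus_sub_path A w) x xm.
have [B [v [hB hv sub neq]]] := replaceable_path hA hw xF.
exists B, v; split=> //.
have keep y : y \in plus_set A w -> y \in path_set B v.
  move=> /setDP [yF ym]; apply: (subsetP sub); rewrite in_setD1 yF andbT.
  by apply: contraNneq ym => ->.
case: (eqVneq B A) => [eBA|nBA].
  subst B; right; split=> //; have nvw : v <> w by move=> e; rewrite e eqxx in neq.
  case: (stdlt_total hv hw nvw) => // lt.
  by have [y yp] := stdlt_misses_plus hA hw hv lt; rewrite keep.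
case: (lexlt_total hB hA (elimN eqP nBA)) => lt; first by left.
by have [y yp] := lexlt_misses_plus hA hw hB hv lt; rewrite keep.
Qed.

Lemma plus_replacement_above x : x \in plus_set A w ->
  exists B v, [/\ inA B, size v = m.-1, F :\ x \subset path_set B v &
                  lexlt A B \/ (B = A /\ stdlt m w v)].
Proof.
move=> xp; have [B [v [hB hv sub neq]]] := replaceable_path hA hw (subsetP (subsetDl _ _) x xp).
exists B, v; split=> //.
have keep y : y \in minus_set A w -> y \in path_set B v.
  move=> ym; apply: (subsetP sub); rewrite in_setD1 (subsetP (minus_sub_path A w) y ym) andbT.
  by apply: contraTneq xp => <-; rewrite in_setD ym.
case: (eqVneq B A) => [eBA|nBA].
  subst B; right; split=> //; have nwv : w <> v by move=> e; rewrite e eqxx in neq.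
  case: (stdlt_total hw hv nwv) => // lt.
  by have [y ym] := stdlt_misses_minus hA hw hv lt; rewrite keep.
case: (lexlt_total hA hB (fun e => elimN eqP nBA (esym e))) => lt; first by left.
by have [y ym] := lexlt_misses_minus hA hw hB hv lt; rewrite keep.
Qed.

Lemma lower_link (H : {set pt m}) :
  (H \subset F /\ exists G, facet_lt G F /\ H \subset G) <->
  (exists x, x \in minus_set A w /\ H \subset F :\ x).
Proof.
split.
  case=> HF [G [[B [A' [v [w' [[hB hA' hv hw'] [-> eF _ _ lt]]]]]] HG]].
  case: (path_set_inj hA hA' hw hw' eF) => eA ew; subst A' w'.
  have [x xm xG] := misses_minus_below hB hv lt.
  by exists x; split=> //; exact: subset_setD1 HF HG xG.
case=> x [xm HFx]; have [B [v [hB hv sub lt]]] := minus_replacement_below xm.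
split; first exact: subset_trans HFx (subD1set _ _).
exists (path_set B v); split; last exact: subset_trans HFx sub.
by exists B, A, v, w; split=> //; split=> //; exact: facet_path.
Qed.

Lemma upper_link (H : {set pt m}) :
  (H \subset F /\ exists G, facet_lt F G /\ H \subset G) <->
  (exists x, x \in plus_set A w /\ H \subset F :\ x).
Proof.
split.
  case=> HF [G [[A' [B [w' [v [[hA' hB hw' hv] [eF -> _ _ lt]]]]]] HG]].
  case: (path_set_inj hA hA' hw hw' eF) => eA ew; subst A' w'.
  have lt' : lexlt A B \/ (B = A /\ stdlt m w v) by case: lt => [|[-> ?]]; [left | right].
  have [x xp xG] := misses_plus_above hB hv lt'.
  by exists x; split=> //; exact: subset_setD1 HF HG xG.
case=> x [xp HFx]; have [B [v [hB hv sub lt]]] := plus_replacement_above xp.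
split; first exact: subset_trans HFx (subD1set _ _).
exists (path_set B v); split; last exact: subset_trans HFx sub.
exists A, B, w, v; split=> //; split=> //; try exact: facet_path.
by case: lt => [|[-> ?]]; [left | right].
Qed.

End Shelling.

Theorem proposition5p4 (m : nat) (hm : 0 < m) :
  forall F : {set pt m}, facet F ->
  forall (A : {set 'I_(m.*2).+1}) (w : seq bool),
    inA A -> size w = m.-1 -> F = path_set A w ->
    (forall H : {set pt m},
        (H \subset F /\ exists G, facet_lt G F /\ H \subset G) <->
        (exists x, x \in minus_set A w /\ H \subset F :\ x)) /\
    (forall H : {set pt m},
        (H \subset F /\ exists G, facet_lt F G /\ H \subset G) <->
        (exists x, x \in plus_set A w /\ H \subset F :\ x)).
Proof.
move=> F _ A w hA hw ->.
by split=> H; [exact: lower_link | exact: upper_link].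
Qed.
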